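(* Let $D$ be a tournament missing disjoint paths of length 2, and let $C=a_1b_1c_1,\dots,a_kb_kc_k$ be a double cycle in $\Delta(D)$. Then there exists $t\in\{1,\dots,k\}$ such that $|N^+_{D[K(C)]}(b_t)|\le|N^{++}_{D[K(C)]}(b_t)|$.
   Context: All digraphs are finite oriented graphs; $D[X]$ is the subdigraph induced by $X$. $N^+_H(v)$ is the out-neighborhood in $H$; $N^{++}_H(v)$ is the set of vertices $w\notin N_H^+(v)\cup\{v\}$ with $u\to w$ in $H$ for some $u\in N_H^+(v)$. A missing edge is a pair of distinct non-adjacent vertices; the missing graph is formed by the missing edges. $D$ is a tournament missing disjoint paths of length 2 if its missing graph is a vertex-disjoint union of paths each with exactly two edges. For missing edges $\{x,y\},\{a,b\}$, $\{x,y\}$ loses to $\{a,b\}$ (written $xy\to ab$) if the endpoints can be labelled so that $x\to a$, $b\notin N^+(x)\cup N^{++}(x)$, $y\to b$, $a\notin N^+(y)\cup N^{++}(y)$ (neighborhoods in $D$). $\Delta(D)$ has the missing edges as vertices and arcs $(e,e')$ whenever $e$ loses to $e'$. For missing paths $abc$, $xyz$ (edges $ab,bc$ and $xy,yz$), $abc\to xyz$ means each of $ab,bc$ loses to each of $xy,yz$. A double cycle is a sequence $C=a_1b_1c_1,\dots,a_kb_kc_k$ ($k\ge2$) of distinct missing paths of length 2 (components of the missing graph) with $a_ib_ic_i\to a_{i+1}b_{i+1}c_{i+1}$ for all $i$, indices modulo $k$. $K(C)=\{a_i,b_i,c_i: 1\le i\le k\}$. *)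

From mathcomp Require Import all_boot.
Set Implicit Arguments. Unset Strict Implicit. Unset Printing Implicit Defensive.

Section Digraph.
Variables (T : finType) (arc : rel T).

Definition oriented := (forall x, ~~ arc x x) /\ (forall x y, arc x y -> ~~ arc y x).

Definition outN (X : {set T}) (v : T) : {set T} :=
  [set w in X | (v \in X) && arc v w].
Definition outN2 (X : {set T}) (v : T) : {set T} :=
  [set w in X | [&& w \notin outN X v, w != v &
                 [exists u, (u \in outN X v) && arc u w]]].

Definition missing (x y : T) := [&& x != y, ~~ arc x y & ~~ arc y x].

(* a b c is a path with exactly the two missing edges ab, bc that forms a
   whole connected component of the missing graph *)
Definition mpath_comp (a b c : T) :=
  [&& a != b, b != c, a != c, missing a b, missing b c, ~~ missing a c &
      [forall u in [set a; b; c], forall w, missing u w ==> (w \in [set a; b; c])]].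

Definition tmdp :=
  oriented /\ forall x y, missing x y ->
    exists a b c, mpath_comp a b c /\ x \in [set a; b; c] /\ y \in [set a; b; c].

(* xy loses to ab, for one fixed labelling *)
Definition loses_lab (x y a b : T) :=
  [&& arc x a, b \notin outN setT x :|: outN2 setT x,
      arc y b & a \notin outN setT y :|: outN2 setT y].

Definition loses (x y a b : T) :=
  [|| loses_lab x y a b, loses_lab y x a b, loses_lab x y b a | loses_lab y x b a].

Definition path_loses (a b c x y z : T) :=
  [&& loses a b x y, loses a b y z, loses b c x y & loses b c y z].

(* C = a_0 b_0 c_0, ..., a_{k-1} b_{k-1} c_{k-1} is a double cycle *)
Definition double_cycle (k : nat) (a b c : nat -> T) :=
  [/\ 2 <= k,
      (forall i, i < k -> mpath_comp (a i) (b i) (c i)),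
      (forall i j, i < k -> j < k ->
         [set a i; b i; c i] = [set a j; b j; c j] -> i = j) &
      (forall i, i < k ->
         path_loses (a i) (b i) (c i) (a (i.+1 %% k)) (b (i.+1 %% k)) (c (i.+1 %% k)))].

Definition KC (k : nat) (a b c : nat -> T) : {set T} :=
  \bigcup_(i < k) [set a i; b i; c i].

End Digraph.

From mathcomp Require Import all_boot zify.
Set Implicit Arguments. Unset Strict Implicit. Unset Printing Implicit Defensive.

(* Write O_n for the out-neighbourhood of b_n in D[K(C)], indices taken mod k.
   Because a_n b_n c_n -> a_(n+1) b_(n+1) c_(n+1), every vertex of the next path
   beats exactly one of a_n, b_n, and each of a_(n+1), b_(n+1) is at distance
   more than 2 from one of a_n, b_n.  So a common out- (in-) neighbour of a_n
   and b_n is one of a_(n+1) and b_(n+1) as well (of a_(n-1) and b_(n-1)), and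
   going round the cycle shows that no vertex of K(C) is such a neighbour.
   Consequently, if b_n -> b_(n+1) then O_n, O_(n+1) and {b_n, a_(n+1), c_(n+1)}
   are disjoint, and b_(n+1) beats every vertex of K(C) outside O_n and those
   three vertices, which therefore lies in N^++(b_n); if b_(n+1) -> b_n then
   |O_(n+1)| < |O_n|.  As |O_n| cannot decrease all the way round, some n has
   b_n -> b_(n+1) and |O_n| <= |O_(n+1)|, whence
   |O_n| <= (|K(C)| - 3) / 2 <= |N^++(b_n)|. *)

Section FinsetFacts.
Variable T : finType.

Lemma set3P (x u v w : T) :
  reflect [\/ x = u, x = v | x = w] (x \in [set u; v; w]).
Proof.
rewrite !inE -orbA.
apply: (iffP or3P) => -[] /eqP; by [constructor 1 | constructor 2 | constructor 3].
Qed.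

Lemma card_set3 (x y z : T) : #|[set x; y; z]| = (x \notin [set y; z]) + (y != z).+1.
Proof. by rewrite -setUA cardsU1 cards2. Qed.

Lemma cardsU_disjoint (A B : {set T}) :
  (forall x, x \in A -> x \notin B) -> #|A :|: B| = #|A| + #|B|.
Proof.
move=> AnB; apply/eqP; rewrite (leq_card_setU A B).2 disjoint_subset.
by apply/subsetP=> x /AnB.
Qed.

End FinsetFacts.

Section Losing.
Variables (T : finType) (arc : rel T).

(* [far v u] says u \notin N^+(v) :|: N^++(v) in D; beware that [far v v] holds. *)
Definition far (v u : T) := u \notin outN arc setT v :|: outN2 arc setT v.

Lemma far_arcF v u : far v u -> ~~ arc v u.
Proof. by rewrite /far in_setU negb_or !inE => /andP[]. Qed.

Lemma far_arc2F u v w : u != v -> far v u -> arc v w -> ~~ arc w u.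
Proof.
move=> neq_uv far_vu arc_vw; apply/negP=> arc_wu; move: far_vu.
rewrite /far in_setU negb_or => /andP[uNout /negP]; apply.
rewrite inE in_setT uNout neq_uv /=.
by apply/existsP; exists w; rewrite !inE arc_vw.
Qed.

Lemma losesC x y p q : loses arc x y p q -> loses arc y x p q.
Proof. by case/or4P=> h; apply/or4P; [apply: Or42 | apply: Or41 | apply: Or44 | apply: Or43]. Qed.

Lemma losesCr x y p q : loses arc x y p q -> loses arc x y q p.
Proof. by case/or4P=> h; apply/or4P; [apply: Or43 | apply: Or44 | apply: Or41 | apply: Or42]. Qed.

Lemma loses_target x y p q : loses arc x y p q -> arc x p != arc y p.
Proof.
by case/or4P=> /and4P[h1 /far_arcF h2 h3 /far_arcF h4];
  rewrite ?h1 ?h3 ?(negbTE h2) ?(negbTE h4).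
Qed.

Lemma loses_source x y p q : loses arc x y p q -> arc x p != arc x q.
Proof.
by case/or4P=> /and4P[h1 /far_arcF h2 h3 /far_arcF h4];
  rewrite ?h1 ?h3 ?(negbTE h2) ?(negbTE h4).
Qed.

Lemma loses_far x y p q : loses arc x y p q ->
  if arc x p then far x q && far y p else far x p && far y q.
Proof.
rewrite /far; case/or4P=> /and4P[h1 h2 h3 h4]; rewrite ?h1 ?h2 ?h3 ?h4 //=.
all: by rewrite ?(negbTE (far_arcF h2)) ?(negbTE (far_arcF h4)).
Qed.

End Losing.

Section Components.
Variables (T : finType) (arc : rel T).

Lemma missingC x y : missing arc x y = missing arc y x.
Proof. by rewrite /missing eq_sym; case: (arc x y); case: (arc y x). Qed.

Lemma mpath_comp_closed a b c u w : mpath_comp arc a b c ->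
  u \in [set a; b; c] -> missing arc u w -> w \in [set a; b; c].
Proof.
case/and3P=> _ _ /and5P[_ _ _ _ /forall_inP closed] uS.
by move/(implyP (forallP (closed u uS) w)).
Qed.

Lemma mpath_comp_sub a b c a2 b2 c2 v :
  mpath_comp arc a b c -> mpath_comp arc a2 b2 c2 ->
  v \in [set a; b; c] -> v \in [set a2; b2; c2] ->
  [set a; b; c] \subset [set a2; b2; c2].
Proof.
move=> mp mp2 vS vS2; have /and3P[_ _ /and5P[_ mab mbc _ _]] := mp.
have bS2 : b \in [set a2; b2; c2].
  move: vS2; case/set3P: vS => -> vS2 //; apply: mpath_comp_closed mp2 vS2 _ => //.
  by rewrite missingC.
apply/subsetP=> x /set3P[] -> //; apply: mpath_comp_closed mp2 bS2 _ => //.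
by rewrite missingC.
Qed.

Lemma mpath_comp_eq a b c a2 b2 c2 v :
  mpath_comp arc a b c -> mpath_comp arc a2 b2 c2 ->
  v \in [set a; b; c] -> v \in [set a2; b2; c2] ->
  [set a; b; c] = [set a2; b2; c2].
Proof.
move=> mp mp2 vS vS2; apply/eqP; rewrite eqEsubset.
by rewrite (mpath_comp_sub mp mp2 vS vS2) (mpath_comp_sub mp2 mp vS2 vS).
Qed.

Lemma mpath_comp_arcN a b c u w : oriented arc -> mpath_comp arc a b c ->
  u \in [set a; b; c] -> w \notin [set a; b; c] -> arc w u = ~~ arc u w.
Proof.
move=> [_ asym] mp uS wS.
have neq_uw : u != w by apply: contraNneq wS => <-.
have : ~~ missing arc u w by apply: contra wS; apply: mpath_comp_closed mp uS.
rewrite /missing neq_uw /= negb_and !negbK.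
by case/orP=> [/[dup] /asym /negbTE -> ->|/[dup] /asym /negbTE -> ->].
Qed.

Lemma mpath_comp_midF a b c u : oriented arc -> mpath_comp arc a b c ->
  u \in [set a; b; c] -> ~~ arc b u && ~~ arc u b.
Proof.
move=> [irr _] /and3P[_ _ /and5P[_ /and3P[_ ab ba] /and3P[_ bc cb] _ _]].
by case/set3P=> ->; rewrite ?ab ?ba ?bc ?cb ?irr.
Qed.

End Components.

Lemma periodic_nondescent k (f : nat -> nat) :
  0 < k -> f k = f 0 -> exists2 n, n < k & f n <= f n.+1.
Proof.
move=> k_gt0 fk.
have [/existsP[n le_f]|/existsPn desc] := boolP [exists n : 'I_k, f n <= f n.+1].
  by exists n.
have drop m : m <= k -> f m + m <= f 0.
  elim: m => [|m IH] lt_mk; first by rewrite addn0.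
  have := desc (Ordinal lt_mk); rewrite -ltnNge /=; have := IH (ltnW lt_mk); lia.
by have := drop k (leqnn k); rewrite fk; lia.
Qed.

Section DoubleCycle.
Variables (T : finType) (arc : rel T) (k : nat) (a b c : nat -> T).
Hypotheses (tm : tmdp arc) (dc : double_cycle arc k a b c).

Let orient : oriented arc. Proof. by case: tm. Qed.
Let asym x y : arc x y -> ~~ arc y x. Proof. by case: orient => _; apply. Qed.

Lemma dc_k_gt0 : 0 < k. Proof. by case: dc; case: k. Qed.

Definition a' n := a (n %% k).
Definition b' n := b (n %% k).
Definition c' n := c (n %% k).
Definition tri n := [set a' n; b' n; c' n].
Local Notation K := (KC k a b c).

Lemma tri_comp n : mpath_comp arc (a' n) (b' n) (c' n).
Proof. by case: dc => _ mp _ _; apply/mp/ltn_pmod/dc_k_gt0. Qed.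

Lemma tri_K n x : x \in tri n -> x \in K.
Proof. by move=> x_n; apply/bigcupP; exists (Ordinal (ltn_pmod n dc_k_gt0)). Qed.

Lemma K_tri x : x \in K -> exists j, x \in tri j.
Proof. by case/bigcupP=> j _ x_j; exists j; rewrite /tri /a' /b' /c' modn_small. Qed.

Lemma tri_disjoint n x : x \in tri n -> x \notin tri n.+1.
Proof.
move=> x_n; apply/negP=> x_n1; case: dc => k_ge2 _ inj _.
have := inj _ _ (ltn_pmod n dc_k_gt0) (ltn_pmod n.+1 dc_k_gt0)
  (mpath_comp_eq (tri_comp n) (tri_comp n.+1) x_n x_n1).
rewrite modnS; case: ifP => [k_dvd|_]; last by lia.
move/eqP=> k_dvd_n; have := dvdn_sub k_dvd k_dvd_n.
by rewrite subSnn dvdn1 => /eqP k1; rewrite k1 in k_ge2.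
Qed.

Lemma arc_outside n u w : u \in tri n -> w \notin tri n -> arc w u = ~~ arc u w.
Proof. exact: mpath_comp_arcN orient (tri_comp n). Qed.

Lemma arc_cross n u w : u \in tri n -> w \in tri n.+1 -> arc w u = ~~ arc u w.
Proof. by move=> u_n w_n1; apply: arc_outside u_n _; apply: contraL w_n1; apply: tri_disjoint. Qed.

Lemma tri_a n : a' n \in tri n. Proof. by apply/set3P; constructor 1. Qed.
Lemma tri_b n : b' n \in tri n. Proof. by apply/set3P; constructor 2. Qed.
Lemma tri_c n : c' n \in tri n. Proof. by apply/set3P; constructor 3. Qed.

Lemma tri_ac n u : u \in [set a' n; c' n] -> u \in tri n.
Proof. by case/set2P=> ->; rewrite ?tri_a ?tri_c. Qed.

Lemma b_nonadj n u : u \in tri n -> ~~ arc (b' n) u && ~~ arc u (b' n).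
Proof. exact: mpath_comp_midF orient (tri_comp n). Qed.

Lemma arc_b_b_succ n : arc (b' n.+1) (b' n) = ~~ arc (b' n) (b' n.+1).
Proof. exact: arc_cross (tri_b n) (tri_b n.+1). Qed.

Lemma arc_b_notin n x : arc (b' n) x -> x \notin tri n.
Proof. by move=> bx; apply: contraL bx => /b_nonadj /andP[]. Qed.

Lemma a_neq_c n : a' n != c' n.
Proof. by case/and3P: (tri_comp n) => _ _ /andP[]. Qed.

Lemma loses_step n u v : u \in [set a' n; c' n] -> v \in [set a' n.+1; c' n.+1] ->
  loses arc (b' n) u (b' n.+1) v.
Proof.
case: dc => _ _ _ /(_ _ (ltn_pmod n dc_k_gt0)).
have -> : (n %% k).+1 %% k = n.+1 %% k by rewrite -addn1 modnDml addn1.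
case/and4P=> l_ab_ab l_ab_bc l_bc_ab l_bc_bc.
case/set2P=> ->; case/set2P=> ->.
- exact: losesC (losesCr l_ab_ab).
- exact: losesC l_ab_bc.
- exact: losesCr l_bc_ab.
- exact: l_bc_bc.
Qed.

Lemma arc_b_succ n u : u \in [set a' n; c' n] ->
  arc u (b' n.+1) = ~~ arc (b' n) (b' n.+1).
Proof.
move=> u_ac; have := loses_target (loses_step u_ac (set21 (a' n.+1) (c' n.+1))).
by case: (arc u _); case: (arc _ _).
Qed.

Lemma arc_b_pred n v : v \in [set a' n.+1; c' n.+1] ->
  arc (b' n) v = ~~ arc (b' n) (b' n.+1).
Proof.
move=> v_ac; have := loses_source (loses_step (set21 (a' n) (c' n)) v_ac).
by case: (arc _ v); case: (arc _ _).
Qed.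

Definition out_pair n w := arc (a' n) w && arc (b' n) w.
Definition in_pair n w := arc w (a' n) && arc w (b' n).

Lemma out_pair_notin_succ n w : out_pair n w -> w \notin tri n.+1.
Proof.
case/andP=> aw bw; apply/negP=> w_n1.
suff : arc (b' n) w != arc (a' n) w by rewrite aw bw.
have a_ac := set21 (a' n) (c' n); case/set3P: w_n1 => ->.
- exact: loses_target (losesCr (loses_step a_ac (set21 _ _))).
- exact: loses_target (loses_step a_ac (set21 _ _)).
- exact: loses_target (losesCr (loses_step a_ac (set22 _ _))).
Qed.

Lemma in_pair_notin_pred n w : in_pair n.+1 w -> w \notin tri n.
Proof.
case/andP=> wa wb; apply/negP=> w_n.
suff : arc w (b' n.+1) != arc w (a' n.+1) by rewrite wa wb.
have a1_ac := set21 (a' n.+1) (c' n.+1); case/set3P: w_n => ->.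
- exact: loses_source (losesC (loses_step (set21 _ _) a1_ac)).
- exact: loses_source (loses_step (set21 _ _) a1_ac).
- exact: loses_source (losesC (loses_step (set22 _ _) a1_ac)).
Qed.

Lemma far_step n :
  if arc (b' n) (b' n.+1) then far arc (b' n) (a' n.+1) && far arc (a' n) (b' n.+1)
  else far arc (b' n) (b' n.+1) && far arc (a' n) (a' n.+1).
Proof. exact: loses_far (loses_step (set21 _ _) (set21 _ _)). Qed.

Lemma far_out n s z w : s \in tri n -> z \in tri n.+1 -> w \notin tri n.+1 ->
  far arc s z -> arc s w -> arc z w.
Proof.
move=> s_n z_n1 w_n1 far_sz sw.
have neq_zs : z != s by apply: contraTneq z_n1 => ->; apply: tri_disjoint.
by rewrite -[arc z w]negbK -(arc_outside z_n1 w_n1) (far_arc2F neq_zs far_sz sw).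
Qed.

Lemma far_in n s z w : s \in tri n -> z \in tri n.+1 -> w \notin tri n ->
  far arc s z -> arc w z -> arc w s.
Proof.
move=> s_n z_n1 w_n far_sz wz.
have neq_zs : z != s by apply: contraTneq z_n1 => ->; apply: tri_disjoint.
by rewrite (arc_outside s_n w_n); apply: contraL wz; apply: far_arc2F neq_zs far_sz.
Qed.

Lemma out_pair_succ n w : out_pair n w -> out_pair n.+1 w.
Proof.
move=> op; have w_n1 := out_pair_notin_succ op; case/andP: op => aw bw.
have := far_step n; case: ifP => _ /andP[far1 far2]; apply/andP; split.
- exact: far_out (tri_b n) (tri_a n.+1) w_n1 far1 bw.
- exact: far_out (tri_a n) (tri_b n.+1) w_n1 far2 aw.
- exact: far_out (tri_a n) (tri_a n.+1) w_n1 far2 aw.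
- exact: far_out (tri_b n) (tri_b n.+1) w_n1 far1 bw.
Qed.

Lemma in_pair_pred n w : in_pair n.+1 w -> in_pair n w.
Proof.
move=> ip; have w_n := in_pair_notin_pred ip; case/andP: ip => wa wb.
have := far_step n; case: ifP => _ /andP[far1 far2]; apply/andP; split.
- exact: far_in (tri_a n) (tri_b n.+1) w_n far2 wb.
- exact: far_in (tri_b n) (tri_a n.+1) w_n far1 wa.
- exact: far_in (tri_a n) (tri_a n.+1) w_n far2 wa.
- exact: far_in (tri_b n) (tri_b n.+1) w_n far1 wb.
Qed.

Lemma out_pair_add n m w : out_pair n w -> out_pair (n + m) w.
Proof. by move=> h; elim: m => [|m IH]; rewrite ?addn0 // addnS; apply: out_pair_succ. Qed.

Lemma in_pair_add n m w : in_pair (n + m) w -> in_pair n w.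
Proof. by elim: m => [|m IH]; rewrite ?addn0 // addnS => /in_pair_pred. Qed.

Lemma out_pair_K n w : w \in K -> ~~ out_pair n w.
Proof.
case/K_tri=> j w_j; apply/negP=> /(out_pair_add (n * k + j - n)).
(* n * k + j is at least n and congruent to j *)
rewrite subnKC; last by have := dc_k_gt0; nia.
rewrite /out_pair /a' /b' modnMDl -/(b' j) => /andP[_].
by apply/negP; case/andP: (b_nonadj w_j).
Qed.

Lemma in_pair_K n w : w \in K -> ~~ in_pair n w.
Proof.
case/K_tri=> j w_j; apply/negP=> h.
have := @in_pair_add j (j * k + n - j) w; rewrite subnKC; last by have := dc_k_gt0; nia.
rewrite /in_pair /a' /b' modnMDl -/(a' n) -/(b' n) -/(b' j) => /(_ h) /andP[_].
by apply/negP; case/andP: (b_nonadj w_j).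
Qed.

Lemma pair_split n w : w \in K -> w \notin tri n -> arc (a' n) w = ~~ arc (b' n) w.
Proof.
move=> wK w_n; have := out_pair_K n wK; have := in_pair_K n wK.
rewrite /out_pair /in_pair (arc_outside (tri_a n) w_n) (arc_outside (tri_b n) w_n).
by case: (arc _ w); case: (arc _ w).
Qed.

Lemma b_succ_arc n w : w \in K -> w \notin tri n -> w \notin tri n.+1 ->
  arc (b' n.+1) w = arc (b' n) w (+) arc (b' n) (b' n.+1).
Proof.
move=> wK w_n w_n1; have split_n := pair_split wK w_n.
have split_n1 := pair_split wK w_n1.
have := far_step n; case: ifP => _ /andP[far1 far2]; rewrite ?addbT ?addbF.
- case bw: (arc (b' n) w).
  + have a1w := far_out (tri_b n) (tri_a n.+1) w_n1 far1 bw.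
    by move: split_n1; rewrite a1w; case: (arc _ w).
  + by apply: far_out (tri_a n) (tri_b n.+1) w_n1 far2 _; rewrite split_n bw.
- case bw: (arc (b' n) w); first exact: far_out (tri_b n) (tri_b n.+1) w_n1 far1 bw.
  have a1w : arc (a' n.+1) w.
    by apply: far_out (tri_a n) (tri_a n.+1) w_n1 far2 _; rewrite split_n bw.
  by move: split_n1; rewrite a1w; case: (arc _ w).
Qed.

Definition outK n := outN arc K (b' n).
Definition out2K n := outN2 arc K (b' n).

Lemma in_outK n w : (w \in outK n) = (w \in K) && arc (b' n) w.
Proof. by rewrite !inE (tri_K (tri_b n)). Qed.

Lemma card_K_le_out n : arc (b' n) (b' n.+1) ->
  #|K| <= #|outK n| + #|out2K n| + 3.
Proof.
move=> bb1; pose S := [set b' n; a' n.+1; c' n.+1].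
have b1_out : b' n.+1 \in outK n by rewrite in_outK (tri_K (tri_b _)) bb1.
have sub : K \subset outK n :|: out2K n :|: S.
  apply/subsetP=> w wK; apply/setUP.
  have [wS|wNS] := boolP (w \in S); [by right | left; apply/setUP].
  have [wO|wNO] := boolP (w \in outK n); [by left | right].
  have nbw : ~~ arc (b' n) w by move: wNO; rewrite in_outK wK.
  move: wNS; rewrite !inE !negb_or => /andP[/andP[w_b w_a1] w_c1].
  suff b1w : arc (b' n.+1) w.
    rewrite wK w_b (tri_K (tri_b n)) nbw /=.
    by apply/existsP; exists (b' n.+1); rewrite b1w andbT.
  have [w_n|w_n] := boolP (w \in tri n).
    case/set3P: w_n w_b => -> w_b.
    - by rewrite (arc_cross (tri_a n) (tri_b n.+1)) (arc_b_succ (set21 _ _)) bb1.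
    - by rewrite eqxx in w_b.
    - by rewrite (arc_cross (tri_c n) (tri_b n.+1)) (arc_b_succ (set22 _ _)) bb1.
  have w_n1 : w \notin tri n.+1.
    by apply/negP; case/set3P=> wE; move: w_a1 wNO w_c1; rewrite wE ?eqxx ?b1_out.
  by rewrite (b_succ_arc wK w_n w_n1) bb1 addbT.
have := subset_leq_card sub; have := (leq_card_setU (outK n :|: out2K n) S).1.
have := (leq_card_setU (outK n) (out2K n)).1.
have : #|S| <= 3 by rewrite card_set3; case: (_ \notin _); case: (_ != _).
lia.
Qed.

Lemma card_outK_pair_le n : arc (b' n) (b' n.+1) ->
  #|outK n| + #|outK n.+1| + 3 <= #|K|.
Proof.
move=> bb1; pose S := [set b' n; a' n.+1; c' n.+1].
have cardS : #|S| = 3.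
  have b_ac : b' n \notin [set a' n.+1; c' n.+1].
    by apply: contra (tri_disjoint (tri_b n)); apply: tri_ac.
  by rewrite card_set3 b_ac a_neq_c.
have out_disj x : x \in outK n -> x \notin outK n.+1.
  rewrite !in_outK => /andP[xK bx]; apply/negP=> /andP[_ b1x].
  move: (b1x); rewrite (b_succ_arc xK (arc_b_notin bx) (arc_b_notin b1x)).
  by rewrite bx bb1.
have S_disj x : x \in outK n :|: outK n.+1 -> x \notin S.
  move=> x_out; apply: contraL x_out; rewrite in_setU !in_outK.
  case/set3P=> ->.
  - case/andP: (b_nonadj (tri_b n)) => /negbTE-> _.
    by rewrite (negbTE (asym bb1)) !andbF.
  - case/andP: (b_nonadj (tri_a n.+1)) => /negbTE-> _.
    by rewrite (arc_b_pred (set21 _ _)) bb1 !andbF.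
  - case/andP: (b_nonadj (tri_c n.+1)) => /negbTE-> _.
    by rewrite (arc_b_pred (set22 _ _)) bb1 !andbF.
have sub : outK n :|: outK n.+1 :|: S \subset K.
  apply/subsetP=> x /setUP[/setUP[]|]; rewrite ?in_outK; [by case/andP | by case/andP |].
  by case/set3P=> ->; apply: tri_K; [apply: tri_b | apply: tri_a | apply: tri_c].
by have := subset_leq_card sub; rewrite cardsU_disjoint // cardsU_disjoint // cardS.
Qed.

Lemma card_outK_succ_lt n : arc (b' n.+1) (b' n) -> #|outK n.+1| < #|outK n|.
Proof.
move=> b1b; pose S := [set a' n.+1; c' n.+1].
have bb1F : arc (b' n) (b' n.+1) = false by apply/negbTE/asym.
have sub : outK n.+1 :|: S \subset outK n :|: [set b' n].
  apply/subsetP=> x /setUP[x_out | x_S]; apply/setUP; last first.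
    by left; rewrite in_outK (tri_K (tri_ac x_S)) (arc_b_pred x_S) bb1F.
  move: x_out; rewrite in_outK => /andP[xK b1x].
  have [->|x_b] := eqVneq x (b' n); [by right; rewrite inE | left].
  have x_n : x \notin tri n.
    apply/negP=> /set3P[] xE; move: b1x x_b; rewrite xE ?eqxx // => b1x _.
    - by move: b1x; rewrite (arc_cross (tri_a n) (tri_b n.+1)) (arc_b_succ (set21 _ _)) bb1F.
    - by move: b1x; rewrite (arc_cross (tri_c n) (tri_b n.+1)) (arc_b_succ (set22 _ _)) bb1F.
  by move: (b1x); rewrite in_outK xK (b_succ_arc xK x_n (arc_b_notin b1x)) bb1F addbF.
have S_disj x : x \in outK n.+1 -> x \notin S.
  by rewrite in_outK => /andP[_ b1x]; apply: contraL b1x => /tri_ac /b_nonadj /andP[].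
have := subset_leq_card sub; rewrite cardsU_disjoint // cards2 a_neq_c.
by have := (leq_card_setU (outK n) [set b' n]).1; rewrite cards1; lia.
Qed.

End DoubleCycle.

Theorem proposition4p12 (T : finType) (arc : rel T) (k : nat) (a b c : nat -> T) :
  tmdp arc -> double_cycle arc k a b c ->
  exists2 t, t < k &
    #|outN arc (KC k a b c) (b t)| <= #|outN2 arc (KC k a b c) (b t)|.
Proof.
move=> tm dc; pose out n := #|outK arc k a b c n|.
have out_k : out k = out 0 by rewrite /out /outK /b' modnn mod0n.
have [n lt_nk le_out] := periodic_nondescent (dc_k_gt0 dc) out_k.
exists n => //; have <- : b' k b n = b n by rewrite /b' modn_small.
change (out n <= #|out2K arc k a b c n|).
have [bb1|nbb1] := boolP (arc (b' k b n) (b' k b n.+1)).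
  have := card_K_le_out tm dc bb1; have := card_outK_pair_le tm dc bb1.
  by rewrite /out in le_out *; lia.
have b1b : arc (b' k b n.+1) (b' k b n) by rewrite (arc_b_b_succ tm dc).
by have := card_outK_succ_lt tm dc b1b; rewrite /out in le_out; lia.
Qed.
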